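(* Let $\Bbbk$ be a field of characteristic $0$ and $X=\{x_1,x_2,\dots\}$. (1) If $g=g(x_1,\dots,x_n)\in\mathrm{SId}$, then $\Psi^{x_i}(g)\in\mathrm{DiSId}$ for all $i=1,\dots,n$. (2) If $f=f(x_1,\dots,x_n)\in\mathrm{DiSId}$ and $f=f_1+\dots+f_n$, where $f_i$ is the sum of the terms of $f$ whose dimonomials have central letter $x_i$, then there exists $j\in\{1,\dots,n\}$ such that $\bar f_j\in\mathrm{SId}$.
   Context: $\mathrm{Alg}\langle X\rangle$ is the free nonassociative algebra. A 0-dialgebra is a vector space with bilinear operations $\vdash,\dashv$ satisfying $(x\dashv y)\vdash z=(x\vdash y)\vdash z$, $x\dashv(y\vdash z)=x\dashv(y\dashv z)$; $\mathrm{DiAlg0}\langle X\rangle$ is the free 0-dialgebra. Central letter of a dimonomial: $c(a)=a$, $c(w_1\vdash w_2)=c(w_2)$, $c(w_1\dashv w_2)=c(w_1)$. For $f\in\mathrm{DiAlg0}\langle X\rangle$, $\bar f\in\mathrm{Alg}\langle X\rangle$ is its image under the map identifying $\vdash$ and $\dashv$ with the ordinary product. For a monomial $w$ of $\mathrm{Alg}\langle X\rangle$ containing $x_i$ exactly once, $\Psi^{x_i}(w)$ is obtained by replacing each product $uv$ by $u\dashv v$ if $x_i$ occurs in $u$ and $u\vdash v$ otherwise; extend linearly to multilinear polynomials. A Jordan algebra: commutative algebra with $J(x_1,\dots,x_4)=0$, $J=x_1(x_2(x_3x_4))+(x_2(x_1x_3))x_4+x_3(x_2(x_1x_4))-(x_1x_2)(x_3x_4)-(x_1x_3)(x_2x_4)-(x_3x_2)(x_1x_4)$;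 Jordan dialgebra: 0-dialgebra with $x_1\vdash x_2=x_2\dashv x_1$ and $\Psi^{x_i}(J)=0$, $i=1,\dots,4$. An associative dialgebra additionally satisfies $(x\vdash y)\vdash z=x\vdash(y\vdash z)$, $(x\dashv y)\dashv z=x\dashv(y\dashv z)$, $(x\vdash y)\dashv z=x\vdash(y\dashv z)$, and $D^{(+)}$ has $a\vdash_+b=\tfrac12(a\vdash b+b\dashv a)$, $a\dashv_+b=\tfrac12(a\dashv b+b\vdash a)$; a Jordan dialgebra is special if it embeds in such a $D^{(+)}$; a Jordan algebra is special if it embeds in $A^{(+)}$ ($a\circ b=\tfrac12(ab+ba)$) for an associative algebra $A$. $\mathrm{SId}$ is the set of multilinear $g\in\mathrm{Alg}\langle X\rangle$ that vanish identically on all special Jordan algebras but not on all Jordan algebras. $\mathrm{DiSId}$ is the set of multilinear $f\in\mathrm{DiAlg0}\langle X\rangle$ that vanish identically on all special Jordan dialgebras but not on all Jordan dialgebras. *)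

From HB Require Import structures.
From mathcomp Require Import all_boot all_order all_algebra.
From mathcomp Require Import freeg.
Set Implicit Arguments. Unset Strict Implicit. Unset Printing Implicit Defensive.
Import Order.TTheory GRing.Theory Num.Theory.
Local Open Scope ring_scope.

Inductive nmono : Type := NVar of nat | NMul of nmono & nmono.

Fixpoint nm_code (m : nmono) : GenTree.tree nat :=
  match m with
  | NVar i => GenTree.Leaf i
  | NMul u v => GenTree.Node 0 [:: nm_code u; nm_code v]
  end.
Fixpoint nm_decode (t : GenTree.tree nat) : option nmono :=
  match t with
  | GenTree.Leaf i => Some (NVar i)
  | GenTree.Node 0 [:: a; b] =>
      match nm_decode a, nm_decode b with
      | Some u, Some v => Some (NMul u v) | _, _ => None end
  | _ => None
  end.
Lemma nm_codeK : pcancel nm_code nm_decode.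
Proof. by elim=> //= u -> v ->. Qed.
HB.instance Definition _ := Countable.copy nmono (pcan_type nm_codeK).

(* Dimonomials: DL u v = u |- v, DR u v = u -| v. *)
Inductive dmono : Type :=
  DVar of nat | DL of dmono & dmono | DR of dmono & dmono.

Fixpoint dm_code (m : dmono) : GenTree.tree nat :=
  match m with
  | DVar i => GenTree.Leaf i
  | DL u v => GenTree.Node 0 [:: dm_code u; dm_code v]
  | DR u v => GenTree.Node 1 [:: dm_code u; dm_code v]
  end.
Fixpoint dm_decode (t : GenTree.tree nat) : option dmono :=
  match t with
  | GenTree.Leaf i => Some (DVar i)
  | GenTree.Node 0 [:: a; b] =>
      match dm_decode a, dm_decode b with
      | Some u, Some v => Some (DL u v) | _, _ => None end
  | GenTree.Node 1 [:: a; b] =>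
      match dm_decode a, dm_decode b with
      | Some u, Some v => Some (DR u v) | _, _ => None end
  | _ => None
  end.
Lemma dm_codeK : pcancel dm_code dm_decode.
Proof. by elim=> //= u -> v ->. Qed.
HB.instance Definition _ := Countable.copy dmono (pcan_type dm_codeK).

(* Free nonassociative algebra Alg<X> (as a k-vector space with basis nmono),
   and the free dialgebra (basis dmono), used as representatives of DiAlg0<X>. *)
Definition Alg (k : fieldType) := {freeg nmono / k}.
Definition DiAlg (k : fieldType) := {freeg dmono / k}.

Fixpoint nleaves (m : nmono) : seq nat :=
  match m with NVar i => [:: i] | NMul u v => nleaves u ++ nleaves v end.
Fixpoint dleaves (m : dmono) : seq nat :=
  match m with
  | DVar i => [:: i] | DL u v => dleaves u ++ dleaves v
  | DR u v => dleaves u ++ dleaves v end.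

Definition multilin_in (k : fieldType) (n : nat) (g : Alg k) : Prop :=
  forall m, m \in dom g -> perm_eq (nleaves m) (iota 1 n).
Definition dmultilin_in (k : fieldType) (n : nat) (f : DiAlg k) : Prop :=
  forall m, m \in dom f -> perm_eq (dleaves m) (iota 1 n).
Definition multilinear (k : fieldType) (g : Alg k) : Prop :=
  exists S : seq nat, uniq S /\ forall m, m \in dom g -> perm_eq (nleaves m) S.
Definition dmultilinear (k : fieldType) (f : DiAlg k) : Prop :=
  exists S : seq nat, uniq S /\ forall m, m \in dom f -> perm_eq (dleaves m) S.

Fixpoint central (m : dmono) : nat :=
  match m with DVar a => a | DL _ w2 => central w2 | DR w1 _ => central w1 end.

Fixpoint dbar (m : dmono) : nmono :=
  match m with
  | DVar a => NVar a | DL u v => NMul (dbar u) (dbar v)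
  | DR u v => NMul (dbar u) (dbar v) end.
Definition bar (k : fieldType) (f : DiAlg k) : Alg k :=
  fglift (fun m => << dbar m >> : Alg k) f.

Fixpoint psi_mono (i : nat) (w : nmono) : dmono :=
  match w with
  | NVar a => DVar a
  | NMul u v => if i \in nleaves u then DR (psi_mono i u) (psi_mono i v)
                else DL (psi_mono i u) (psi_mono i v)
  end.
Definition Psi (k : fieldType) (i : nat) (g : Alg k) : DiAlg k :=
  fglift (fun m => << psi_mono i m >> : DiAlg k) g.

Definition central_part (k : fieldType) (j : nat) (f : DiAlg k) : DiAlg k :=
  \sum_(m <- dom f | central m == j) << coeff m f *g m >>.

Record nalg (k : fieldType) := NAlg {
  ncar :> lmodType k;
  nmul : ncar -> ncar -> ncar;
  nmulDl : forall (a : k) (x y z : ncar), nmul (a *: x + y) z = a *: nmul x z + nmul y z;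
  nmulDr : forall (a : k) (x y z : ncar), nmul z (a *: x + y) = a *: nmul z x + nmul z y
}.

Fixpoint neval (k : fieldType) (A : nalg k) (s : nat -> A) (m : nmono) : A :=
  match m with
  | NVar i => s i
  | NMul u v => nmul (neval s u) (neval s v)
  end.
Definition peval (k : fieldType) (A : nalg k) (s : nat -> A) (g : Alg k) : A :=
  fglift (neval s) g.
Definition nvanishes (k : fieldType) (A : nalg k) (g : Alg k) : Prop :=
  forall s : nat -> A, peval s g = 0.

Definition x_ (i : nat) : nmono := NVar i.
Definition Jpoly (k : fieldType) : Alg k :=
    << NMul (x_ 1) (NMul (x_ 2) (NMul (x_ 3) (x_ 4))) >>
  + << NMul (NMul (x_ 2) (NMul (x_ 1) (x_ 3))) (x_ 4) >>
  + << NMul (x_ 3) (NMul (x_ 2) (NMul (x_ 1) (x_ 4))) >>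
  - << NMul (NMul (x_ 1) (x_ 2)) (NMul (x_ 3) (x_ 4)) >>
  - << NMul (NMul (x_ 1) (x_ 3)) (NMul (x_ 2) (x_ 4)) >>
  - << NMul (NMul (x_ 3) (x_ 2)) (NMul (x_ 1) (x_ 4)) >>.

Definition is_jordan (k : fieldType) (A : nalg k) : Prop :=
  (forall x y : A, nmul x y = nmul y x) /\ nvanishes A (Jpoly k).

Definition is_assoc (k : fieldType) (A : nalg k) : Prop :=
  forall x y z : A, nmul (nmul x y) z = nmul x (nmul y z).

Definition is_special_jordan (k : fieldType) (J : nalg k) : Prop :=
  is_jordan J /\
  exists (A : nalg k) (phi : J -> A),
    is_assoc A /\ injective phi /\
    (forall (a : k) (x y : J), phi (a *: x + y) = a *: phi x + phi y) /\
    (forall x y : J,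
       phi (nmul x y) = 2%:R^-1 *: (nmul (phi x) (phi y) + nmul (phi y) (phi x))).

Definition SId (k : fieldType) (g : Alg k) : Prop :=
  multilinear g /\
  (forall A : nalg k, is_special_jordan A -> nvanishes A g) /\
  ~ (forall A : nalg k, is_jordan A -> nvanishes A g).

Record dialg (k : fieldType) := DiA {
  dcar :> lmodType k;
  dl : dcar -> dcar -> dcar;
  dr : dcar -> dcar -> dcar;
  dlDl : forall (a : k) (x y z : dcar), dl (a *: x + y) z = a *: dl x z + dl y z;
  dlDr : forall (a : k) (x y z : dcar), dl z (a *: x + y) = a *: dl z x + dl z y;
  drDl : forall (a : k) (x y z : dcar), dr (a *: x + y) z = a *: dr x z + dr y z;
  drDr : forall (a : k) (x y z : dcar), dr z (a *: x + y) = a *: dr z x + dr z y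
}.

Fixpoint deval (k : fieldType) (D : dialg k) (s : nat -> D) (m : dmono) : D :=
  match m with
  | DVar i => s i
  | DL u v => dl (deval s u) (deval s v)
  | DR u v => dr (deval s u) (deval s v)
  end.
Definition dpeval (k : fieldType) (D : dialg k) (s : nat -> D) (f : DiAlg k) : D :=
  fglift (deval s) f.
Definition dvanishes (k : fieldType) (D : dialg k) (f : DiAlg k) : Prop :=
  forall s : nat -> D, dpeval s f = 0.

Definition is_0dialg (k : fieldType) (D : dialg k) : Prop :=
  (forall x y z : D, dl (dr x y) z = dl (dl x y) z) /\
  (forall x y z : D, dr x (dl y z) = dr x (dr y z)).

Definition is_jordan_dialg (k : fieldType) (D : dialg k) : Prop :=
  is_0dialg D /\ (forall x y : D, dl x y = dr y x) /\
  (forall i, 1 <= i <= 4 -> dvanishes D (Psi i (Jpoly k)))%N.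

Definition is_assoc_dialg (k : fieldType) (D : dialg k) : Prop :=
  is_0dialg D /\
  (forall x y z : D, dl (dl x y) z = dl x (dl y z)) /\
  (forall x y z : D, dr (dr x y) z = dr x (dr y z)) /\
  (forall x y z : D, dr (dl x y) z = dl x (dr y z)).

Definition is_special_jordan_dialg (k : fieldType) (J : dialg k) : Prop :=
  is_jordan_dialg J /\
  exists (D : dialg k) (phi : J -> D),
    is_assoc_dialg D /\ injective phi /\
    (forall (a : k) (x y : J), phi (a *: x + y) = a *: phi x + phi y) /\
    (forall x y : J,
       phi (dl x y) = 2%:R^-1 *: (dl (phi x) (phi y) + dr (phi y) (phi x))) /\
    (forall x y : J,
       phi (dr x y) = 2%:R^-1 *: (dr (phi x) (phi y) + dl (phi y) (phi x))).

Definition DiSId (k : fieldType) (f : DiAlg k) : Prop :=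
  dmultilinear f /\
  (forall D : dialg k, is_special_jordan_dialg D -> dvanishes D f) /\
  ~ (forall D : dialg k, is_jordan_dialg D -> dvanishes D f).

From HB Require Import structures.
From mathcomp Require Import all_boot all_order all_algebra.
From mathcomp Require Import freeg boolp functions.
Import GRing.Theory.
Local Open Scope ring_scope.
Set Implicit Arguments. Unset Strict Implicit. Unset Printing Implicit Defensive.

(* (1) For an associative dialgebra D, D * D with (u, x)(v, y) = (u -| v, u |- y + x -| v) is an
   associative algebra.  Evaluating a multilinear g in its plus algebra at x_i := (0, t_i) and
   x_l := (t_l, 0) for l <> i gives (0, Psi^{x_i}(g)(t)), the latter computed in D^(+); hence
   Psi^{x_i}(g) vanishes on special Jordan dialgebras.  A Jordan algebra with |- = -| is a Jordan
   dialgebra on which Psi^{x_i}(g) evaluates as g, so Psi^{x_i}(g) is not a Jordan dialgebra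
   identity.
   (2) For a special Jordan algebra A, A * A with (a, x) |- (b, y) = (ab, ay) and
   (a, x) -| (b, y) = (ab, xb) is a special Jordan dialgebra, and at x_l := (a_l, [l = j] a_l) the
   second component of f is bar f_j (a); so every bar f_j vanishes on special Jordan algebras.
   For a Jordan dialgebra J, the left multiplications u |- _ form a Jordan algebra bar J (J modulo
   its left annihilator) and the null extension bar J + J is a Jordan algebra.  At
   x_l := (t_l |- _, [l = j] t_l) the second component of bar f_j is the part of f(t) with central
   letter x_j.  So f(t) is a sum of values of the bar f_j on Jordan algebras, and if every bar f_j
   vanished on all Jordan algebras, f would vanish on all Jordan dialgebras. *)

Section FreeLift.
Variable R : nzRingType.

HB.instance Definition _ (K : choiceType) (M : lmodType R) (f : K -> M) :=
  GRing.isAdditive.Build {freeg K / R} M (fglift f) (lift_is_additive f).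

Section OneLift.
Variables (K : choiceType) (M : lmodType R) (f : K -> M).
Implicit Types D : {freeg K / R}.

Lemma fgliftU x : fglift f << x >> = f x.
Proof. by rewrite liftU scale1r. Qed.

Lemma fgliftE D : fglift f D = \sum_(x <- dom D) coeff x D *: f x.
Proof. by rewrite -{1}[D]freeg_sumE raddf_sum; apply: eq_bigr => x _; apply: liftU. Qed.

Lemma fglift_is_scalable : scalable (fglift f).
Proof.
move=> c D; have -> : c *: D = \sum_(x <- dom D) << c * coeff x D *g x >> by [].
rewrite raddf_sum fgliftE scaler_sumr; apply: eq_bigr => x _.
by rewrite /= liftU scalerA.
Qed.

End OneLift.

HB.instance Definition _ (K : choiceType) (M : lmodType R) (f : K -> M) :=
  GRing.isScalable.Build R {freeg K / R} M *:%R (fglift f) (fglift_is_scalable f).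

Lemma eq_in_fglift (K : choiceType) (M : lmodType R) (f g : K -> M) (D : {freeg K / R}) :
  {in dom D, f =1 g} -> fglift f D = fglift g D.
Proof. by move=> eq_fg; rewrite !fgliftE; apply: eq_big_seq => x xD; rewrite eq_fg. Qed.

Lemma linear_map0 (M N : lmodType R) (L : M -> N) : linear L -> L 0 = 0.
Proof. by move=> L_lin; have := L_lin 1 0 0; rewrite !scale1r addr0 -{1}[L 0]addr0 => /addrI. Qed.

Lemma linear_fglift (K : choiceType) (M N : lmodType R) (L : M -> N) : linear L ->
  forall (f : K -> M) (D : {freeg K / R}), L (fglift f D) = fglift (L \o f) D.
Proof.
move=> L_lin f D; rewrite !fgliftE; elim: (dom D) => [|x s IHs].
  by rewrite !big_nil linear_map0.
by rewrite !big_cons L_lin IHs.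
Qed.

Section Relabel.
Variables (K1 K2 : choiceType) (h : K1 -> K2).

Lemma fglift_relabel (M : lmodType R) (F : K2 -> M) (D : {freeg K1 / R}) :
  fglift F (fglift (fun x => << h x >> : {freeg K2 / R}) D) = fglift (F \o h) D.
Proof.
rewrite linear_fglift; last exact: linearP.
by apply: eq_in_fglift => x _; apply: fgliftU.
Qed.

Lemma dom_relabel (D : {freeg K1 / R}) :
  {subset dom (fglift (fun x => << h x >> : {freeg K2 / R}) D) <= map h (dom D)}.
Proof.
rewrite fgliftE => y /dom_sum_subset /flattenP [s /mapP [x]].
rewrite filter_predT => xD -> /domZ_subset; rewrite domU1 inE => /eqP ->.
exact: map_f.
Qed.

End Relabel.
End FreeLift.

Section Bilinear.
Variables (R : nzRingType) (U V W : lmodType R) (b : U -> V -> W).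
Hypothesis b_linl : forall (a : R) x y z, b (a *: x + y) z = a *: b x z + b y z.
Hypothesis b_linr : forall (a : R) x y z, b z (a *: x + y) = a *: b z x + b z y.

Lemma bilinDl x y z : b (x + y) z = b x z + b y z.
Proof. by have := b_linl 1 x y z; rewrite !scale1r. Qed.
Lemma bilinDr x y z : b z (x + y) = b z x + b z y.
Proof. by have := b_linr 1 x y z; rewrite !scale1r. Qed.
Lemma bilin0l z : b 0 z = 0.
Proof. by apply: (@addrI _ (b 0 z)); rewrite -bilinDl !addr0. Qed.
Lemma bilin0r z : b z 0 = 0.
Proof. by apply: (@addrI _ (b z 0)); rewrite -bilinDr !addr0. Qed.
Lemma bilinZl a x z : b (a *: x) z = a *: b x z.
Proof. by rewrite -[a *: x]addr0 b_linl bilin0l addr0. Qed.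
Lemma bilinZr a x z : b z (a *: x) = a *: b z x.
Proof. by rewrite -[a *: x]addr0 b_linr bilin0r addr0. Qed.
Lemma bilinNl x z : b (- x) z = - b x z.
Proof. by rewrite -scaleN1r bilinZl scaleN1r. Qed.
Lemma bilinBl x y z : b (x - y) z = b x z - b y z.
Proof. by rewrite bilinDl bilinNl. Qed.
Lemma bilin_sumr (I : Type) (r : seq I) (F : I -> V) z :
  b z (\sum_(i <- r) F i) = \sum_(i <- r) b z (F i).
Proof. by elim: r => [|x r IHr]; rewrite ?big_nil ?bilin0r // !big_cons bilinDr IHr. Qed.
End Bilinear.

Section JordanProduct.
Variables (R : comUnitRingType) (V W : lmodType R) (b1 b2 : V -> V -> W).
Hypothesis b1_linl : forall (a : R) x y z, b1 (a *: x + y) z = a *: b1 x z + b1 y z.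
Hypothesis b1_linr : forall (a : R) x y z, b1 z (a *: x + y) = a *: b1 z x + b1 z y.
Hypothesis b2_linl : forall (a : R) x y z, b2 (a *: x + y) z = a *: b2 x z + b2 y z.
Hypothesis b2_linr : forall (a : R) x y z, b2 z (a *: x + y) = a *: b2 z x + b2 z y.

Definition jmul x y := 2%:R^-1 *: (b1 x y + b2 y x).

Lemma jmulDl a x y z : jmul (a *: x + y) z = a *: jmul x z + jmul y z.
Proof. by rewrite /jmul b1_linl b2_linr !scalerDr !scalerA mulrC addrACA. Qed.
Lemma jmulDr a x y z : jmul z (a *: x + y) = a *: jmul z x + jmul z y.
Proof. by rewrite /jmul b1_linr b2_linl !scalerDr !scalerA mulrC addrACA. Qed.
End JordanProduct.

Lemma JpolyE (k : fieldType) (M : lmodType k) (G : nmono -> M) :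
  fglift G (Jpoly k) =
    G (NMul (x_ 1) (NMul (x_ 2) (NMul (x_ 3) (x_ 4))))
  + G (NMul (NMul (x_ 2) (NMul (x_ 1) (x_ 3))) (x_ 4))
  + G (NMul (x_ 3) (NMul (x_ 2) (NMul (x_ 1) (x_ 4))))
  - G (NMul (NMul (x_ 1) (x_ 2)) (NMul (x_ 3) (x_ 4)))
  - G (NMul (NMul (x_ 1) (x_ 3)) (NMul (x_ 2) (x_ 4)))
  - G (NMul (NMul (x_ 3) (x_ 2)) (NMul (x_ 1) (x_ 4))).
Proof. by rewrite /Jpoly !raddfB !raddfD /= !fgliftU. Qed.

Lemma dpeval_PsiE (k : fieldType) (D : dialg k) (t : nat -> D) i g :
  dpeval t (Psi i g) = fglift (deval t \o psi_mono i) g.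
Proof. exact: fglift_relabel. Qed.

Lemma dleaves_psi i w : dleaves (psi_mono i w) = nleaves w.
Proof. by elim: w => //= u IHu v IHv; case: ifP => _; rewrite /= IHu IHv. Qed.
Lemma dbar_psi i w : dbar (psi_mono i w) = w.
Proof. by elim: w => //= u IHu v IHv; case: ifP => _; rewrite /= IHu IHv. Qed.
Lemma nleaves_dbar m : nleaves (dbar m) = dleaves m.
Proof. by elim: m => //= u IHu v IHv; rewrite IHu IHv. Qed.
Lemma central_dleaves m : central m \in dleaves m.
Proof. by elim: m => [a|u _ v IHv|u IHu v _] /=; rewrite ?inE ?mem_cat ?IHu ?IHv ?orbT. Qed.

Lemma count_mem1_cat (T : eqType) (i : T) (s t : seq T) : count_mem i (s ++ t) = 1%N ->
  if i \in s then count_mem i s = 1%N /\ i \notin t else i \notin s /\ count_mem i t = 1%N.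
Proof.
rewrite count_cat; case: ifPn => [i_s|/count_memPn ->] // cnt.
move: i_s cnt; rewrite -has_pred1 has_count.
by case: (count_mem i s) => [|[|n]] // _; rewrite ?addSn // add0n => -[/count_memPn].
Qed.

Lemma count_mem_perm_iota (s : seq nat) i n : perm_eq s (iota 1 n) -> (1 <= i <= n)%N ->
  count_mem i s = 1%N.
Proof.
move=> /permP -> i_range; rewrite count_uniq_mem ?iota_uniq // mem_iota.
by rewrite add1n ltnS i_range.
Qed.

Lemma eq_in_neval (k : fieldType) (A : nalg k) (s1 s2 : nat -> A) w :
  {in nleaves w, s1 =1 s2} -> neval s1 w = neval s2 w.
Proof.
elim: w => [a|u IHu v IHv] /= eq_s; first by apply: eq_s; rewrite inE.
by rewrite IHu ?IHv // => l lw; apply: eq_s; rewrite mem_cat lw ?orbT.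
Qed.

Lemma eq_in_deval (k : fieldType) (D : dialg k) (s1 s2 : nat -> D) m :
  {in dleaves m, s1 =1 s2} -> deval s1 m = deval s2 m.
Proof.
elim: m => [a|u IHu v IHv|u IHu v IHv] /= eq_s; first by apply: eq_s; rewrite inE.
  by rewrite IHu ?IHv // => l lm; apply: eq_s; rewrite mem_cat lm ?orbT.
by rewrite IHu ?IHv // => l lm; apply: eq_s; rewrite mem_cat lm ?orbT.
Qed.

Lemma deval_eq0 (k : fieldType) (D : dialg k) (t : nat -> D) l m :
  l \in dleaves m -> t l = 0 -> deval t m = 0.
Proof.
move=> + tl0; elim: m => [a|u IHu v IHv|u IHu v IHv] /=; first by rewrite inE => /eqP <-.
  by rewrite mem_cat => /orP[/IHu ->|/IHv ->]; rewrite ?(bilin0l (@dlDl _ D), bilin0r (@dlDr _ D)).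
by rewrite mem_cat => /orP[/IHu ->|/IHv ->]; rewrite ?(bilin0l (@drDl _ D), bilin0r (@drDr _ D)).
Qed.

(* Closes an equation between sums of the same terms in different order and bracketing. *)
Ltac ac_sum :=
  rewrite -[LHS]addr0 -[RHS]addr0 -?addrA;
  repeat match goal with
  | |- ?a + _ = _ => rewrite ?[in RHS](addrCA _ a); congr (a + _)
  end.

Section PlusAlgebra.
Variables (k : fieldType) (A : nalg k).

Definition plus_nalg : nalg k :=
  NAlg (jmulDl (@nmulDl _ A) (@nmulDr _ A)) (jmulDr (@nmulDr _ A) (@nmulDl _ A)).

Lemma plus_nalg_special : is_assoc A -> is_special_jordan plus_nalg.
Proof.
move=> mulA; split; last by exists A, id; do !split.
split=> [x y|s]; first by rewrite /= /jmul addrC.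
pose q (x y : A) : A := nmul x y + nmul y x.
have qZl a x y : q (a *: x) y = a *: q x y.
  by rewrite /q (bilinZl (@nmulDl _ A)) (bilinZr (@nmulDr _ A)) scalerDr.
have qZr a x y : q x (a *: y) = a *: q x y.
  by rewrite /q (bilinZl (@nmulDl _ A)) (bilinZr (@nmulDr _ A)) scalerDr.
have jq (x y : A) : jmul (@nmul _ A) (@nmul _ A) x y = 2%:R^-1 *: q x y by [].
rewrite /peval JpolyE /= !jq !(qZl, qZr) !scalerA -!scalerDr -!scalerBr.
rewrite [X in _ *: X](_ : _ = 0) ?scaler0 //; apply/eqP.
rewrite -!addrA -!opprD !addrA subr_eq0; apply/eqP.
rewrite /q !(bilinDl (@nmulDl _ A), bilinDr (@nmulDr _ A)) !mulA.
by ac_sum.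
Qed.
End PlusAlgebra.

Section DiagonalDialgebra.
Variables (k : fieldType) (A : nalg k).

Definition diag_dialg : dialg k :=
  DiA (@nmulDl _ A) (@nmulDr _ A) (@nmulDl _ A) (@nmulDr _ A).

Lemma deval_diag_psi s i w : @deval k diag_dialg s (psi_mono i w) = neval s w.
Proof. by elim: w => //= u IHu v IHv; case: ifP => _ /=; rewrite IHu IHv. Qed.

Lemma dpeval_diag_Psi s i g : @dpeval k diag_dialg s (Psi i g) = peval s g.
Proof. by rewrite dpeval_PsiE; apply: eq_in_fglift => w _; apply: deval_diag_psi. Qed.

Lemma diag_dialg_jordan : is_jordan A -> is_jordan_dialg diag_dialg.
Proof.
case=> mulC J0; split=> //; split=> [|i _ s]; first exact: mulC.
by rewrite dpeval_diag_Psi.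
Qed.

End DiagonalDialgebra.

Definition plus_dialg (k : fieldType) (D : dialg k) : dialg k :=
  DiA (jmulDl (@dlDl _ D) (@drDr _ D)) (jmulDr (@dlDr _ D) (@drDl _ D))
      (jmulDl (@drDl _ D) (@dlDr _ D)) (jmulDr (@drDr _ D) (@dlDl _ D)).

Section AssocExtension.
Variables (k : fieldType) (D : dialg k).

Definition assoc_ext_mul (p q : D * D) : D * D := (dr p.1 q.1, dl p.1 q.2 + dr p.2 q.1).

Lemma assoc_ext_mulDl a p q r :
  assoc_ext_mul (a *: p + q) r = a *: assoc_ext_mul p r + assoc_ext_mul q r.
Proof. by congr pair => /=; rewrite 1?dlDl drDl 1?scalerDr 1?addrACA. Qed.
Lemma assoc_ext_mulDr a p q r :
  assoc_ext_mul r (a *: p + q) = a *: assoc_ext_mul r p + assoc_ext_mul r q.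
Proof. by congr pair => /=; rewrite 1?dlDr drDr 1?scalerDr 1?addrACA. Qed.

Definition assoc_ext : nalg k := NAlg assoc_ext_mulDl assoc_ext_mulDr.

Hypothesis D_assoc : is_assoc_dialg D.

Let dl_dr : forall x y z : D, dl (dr x y) z = dl (dl x y) z := D_assoc.1.1.
Let dr_dl : forall x y z : D, dr x (dl y z) = dr x (dr y z) := D_assoc.1.2.
Let dlA : forall x y z : D, dl (dl x y) z = dl x (dl y z) := D_assoc.2.1.
Let drA : forall x y z : D, dr (dr x y) z = dr x (dr y z) := D_assoc.2.2.1.
Let dr_dlA : forall x y z : D, dr (dl x y) z = dl x (dr y z) := D_assoc.2.2.2.

Let bilin0E := (bilin0l (@dlDl _ D), bilin0l (@drDl _ D), bilin0r (@dlDr _ D),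
                bilin0r (@drDr _ D)).

Lemma assoc_ext_assoc : is_assoc assoc_ext.
Proof.
move=> [u x] [v y] [w z]; congr pair => /=; first exact: drA.
by rewrite (bilinDl (@drDl _ D)) (bilinDr (@dlDr _ D)) dl_dr dlA dr_dlA drA addrA.
Qed.

Definition assoc_ext_subst (t : nat -> D) (i : nat) : nat -> plus_nalg assoc_ext :=
  fun l => if l == i then (0, t l) else (t l, 0).

Lemma neval_assoc_ext_subst_free t i w : i \notin nleaves w ->
  let e := neval (assoc_ext_subst t i) w in let d := @deval _ (plus_dialg D) t (psi_mono i w) in
  [/\ e.2 = 0, forall y, dl e.1 y = @dl _ D d y & forall y, dr y e.1 = @dr _ D y d].
Proof.
elim: w => [a|u IHu v IHv] /=.
  by rewrite inE eq_sym /assoc_ext_subst => /negbTE ->.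
rewrite mem_cat negb_or => /andP[iu iv]; rewrite (negbTE iu).
have [su lu ru] := IHu iu; have [sv lv rv] := IHv iv.
rewrite /jmul /assoc_ext_mul /= su sv !bilin0E !addr0 scaler0.
split=> // y.
  rewrite !(bilinZl (@dlDl _ D), bilinDl (@dlDl _ D)); congr (_ *: (_ + _)).
    by rewrite dl_dr dlA lu lv -dlA.
  by rewrite dl_dr dlA lv lu -dlA -dl_dr.
rewrite !(bilinZr (@drDr _ D), bilinDr (@drDr _ D)); congr (_ *: (_ + _)).
  by rewrite -drA ru rv drA -dr_dl.
by rewrite -drA rv ru drA.
Qed.

Lemma neval_assoc_ext_subst t i w : count_mem i (nleaves w) = 1%N ->
  neval (assoc_ext_subst t i) w = (0, @deval _ (plus_dialg D) t (psi_mono i w)).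
Proof.
elim: w => [a|u IHu v IHv] /=.
  by rewrite addn0 /assoc_ext_subst; case: eqP => [->|].
move/count_mem1_cat; case: ifP => _ [cnt_u cnt_v].
  rewrite (IHu cnt_u); have [_ lv rv] := neval_assoc_ext_subst_free t cnt_v.
  by congr pair => /=; rewrite !bilin0E ?addr0 ?scaler0 ?add0r ?rv ?lv.
rewrite (IHv cnt_v); have [_ lu ru] := neval_assoc_ext_subst_free t cnt_u.
by congr pair => /=; rewrite !bilin0E ?addr0 ?scaler0 ?add0r ?lu ?ru.
Qed.
End AssocExtension.

Lemma deval_morph_plus (k : fieldType) (J D : dialg k) (phi : J -> D) :
  (forall x y : J, phi (dl x y) = 2%:R^-1 *: (dl (phi x) (phi y) + dr (phi y) (phi x))) ->
  (forall x y : J, phi (dr x y) = 2%:R^-1 *: (dr (phi x) (phi y) + dl (phi y) (phi x))) ->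
  forall s m, phi (deval s m) = @deval _ (plus_dialg D) (phi \o s) m.
Proof. by move=> phi_dl phi_dr s; elim=> //= u IHu v IHv; rewrite ?phi_dl ?phi_dr IHu IHv. Qed.

Lemma Psi_special_vanish (k : fieldType) n i (g : Alg k) :
  multilin_in n g -> (1 <= i <= n)%N ->
  (forall A : nalg k, is_special_jordan A -> nvanishes A g) ->
  forall J : dialg k, is_special_jordan_dialg J -> dvanishes J (Psi i g).
Proof.
move=> g_ml i_range g_special J [_ [D [phi [D_assoc [phi_inj [phi_lin [phi_dl phi_dr]]]]]]] s.
apply: phi_inj; have -> : phi (dpeval s (Psi i g)) = (peval (assoc_ext_subst (phi \o s) i) g).2.
  rewrite dpeval_PsiE /peval (linear_fglift phi_lin) (linear_fglift (L := snd)); last first.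
    exact: linearP.
  apply: eq_in_fglift => w /g_ml w_perm /=; rewrite (deval_morph_plus phi_dl phi_dr).
  by rewrite neval_assoc_ext_subst ?(count_mem_perm_iota w_perm).
by rewrite g_special ?linear_map0 //; apply/plus_nalg_special/assoc_ext_assoc.
Qed.

Lemma Psi_SId (k : fieldType) n (g : Alg k) : multilin_in n g -> SId g ->
  forall i, (1 <= i <= n)%N -> DiSId (Psi i g).
Proof.
move=> g_ml [[S [S_uniq g_S]] [g_special g_not]] i i_range; split.
  by exists S; split=> // m /dom_relabel /mapP [w /g_S w_S ->]; rewrite dleaves_psi.
split; first exact: Psi_special_vanish g_ml i_range g_special.
move=> Psi_vanish; apply: g_not => A A_jordan s.
by rewrite -(dpeval_diag_Psi s i) (Psi_vanish _ (diag_dialg_jordan A_jordan)).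
Qed.

Lemma fglift_central_part (k : fieldType) (M : lmodType k) (F : dmono -> M) j (f : DiAlg k) :
  fglift F (central_part j f) = \sum_(m <- dom f | central m == j) coeff m f *: F m.
Proof. by rewrite raddf_sum; apply: eq_bigr => m _; rewrite /= liftU. Qed.

Lemma central_part_sum (k : fieldType) n (f : DiAlg k) :
  dmultilin_in n f -> \sum_(j <- iota 1 n) central_part j f = f.
Proof.
move=> f_ml; rewrite (exchange_big_dep predT) //= -[RHS]freeg_sumE.
apply: eq_big_seq => m m_f; rewrite (eq_bigl (pred1 (central m))) => [|j]; last by rewrite eq_sym.
rewrite -big_filter filter_pred1_uniq ?big_seq1 ?iota_uniq //.
by rewrite -(perm_mem (f_ml m m_f)) central_dleaves.
Qed.

Lemma dom_central_part (k : fieldType) j (f : DiAlg k) : {subset dom (central_part j f) <= dom f}.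
Proof.
move=> m /dom_sum_subset /flattenP [_ /mapP [m' + ->]].
rewrite mem_filter => /andP[_ m'f]; rewrite mem_dom coeffU.
by case: (m' =P m) => [<-|_] //; rewrite mulr0 eqxx.
Qed.

Lemma bar_central_part_multilinear (k : fieldType) j (f : DiAlg k) :
  dmultilinear f -> multilinear (bar (central_part j f)).
Proof.
move=> [S [S_uniq f_S]]; exists S; split=> // w /dom_relabel /mapP [m /dom_central_part m_f ->].
by rewrite nleaves_dbar f_S.
Qed.

Section DoubleDialgebra.
Variables (k : fieldType) (A : nalg k).

Definition double_dl (p q : A * A) : A * A := (nmul p.1 q.1, nmul p.1 q.2).
Definition double_dr (p q : A * A) : A * A := (nmul p.1 q.1, nmul p.2 q.1).

Lemma double_dlDl a p q r : double_dl (a *: p + q) r = a *: double_dl p r + double_dl q r.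
Proof. by congr pair => /=; rewrite nmulDl. Qed.
Lemma double_dlDr a p q r : double_dl r (a *: p + q) = a *: double_dl r p + double_dl r q.
Proof. by congr pair => /=; rewrite nmulDr. Qed.
Lemma double_drDl a p q r : double_dr (a *: p + q) r = a *: double_dr p r + double_dr q r.
Proof. by congr pair => /=; rewrite nmulDl. Qed.
Lemma double_drDr a p q r : double_dr r (a *: p + q) = a *: double_dr r p + double_dr r q.
Proof. by congr pair => /=; rewrite nmulDr. Qed.

Definition double_dialg : dialg k := DiA double_dlDl double_dlDr double_drDl double_drDr.

Lemma deval_double_fst s m : (@deval _ double_dialg s m).1 = neval (fun l => (s l).1) (dbar m).
Proof. by elim: m => //= u IHu v IHv; rewrite IHu IHv. Qed.

Lemma deval_double_psi s i w : count_mem i (nleaves w) = 1%N ->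
  (@deval _ double_dialg s (psi_mono i w)).2 =
  neval (fun l => if l == i then (s l).2 else (s l).1) w.
Proof.
elim: w => [a|u IHu v IHv] /=.
  by rewrite addn0; case: eqP => [->|].
move/count_mem1_cat; case: ifP => _ [cnt_u cnt_v] /=.
  rewrite IHu // deval_double_fst dbar_psi; congr nmul; apply: eq_in_neval => l lv /=.
  by case: eqP lv => [->|]; rewrite ?(negbTE cnt_v).
rewrite IHv // deval_double_fst dbar_psi; congr nmul; apply: eq_in_neval => l lu /=.
by case: eqP lu => [->|]; rewrite ?(negbTE cnt_u).
Qed.

Definition double_subst (a : nat -> A) j : nat -> double_dialg :=
  fun l => (a l, if l == j then a l else 0).

Lemma deval_double_subst a j m :
  (deval (double_subst a j) m).2 = if central m == j then neval a (dbar m) else 0.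
Proof.
elim: m => [l|u _ v IHv|u IHu v _] //=; rewrite deval_double_fst ?IHu ?IHv.
  by case: ifP => _ //; rewrite (bilin0r (@nmulDr _ A)).
by case: ifP => _ //; rewrite (bilin0l (@nmulDl _ A)).
Qed.

Lemma double_dialg_jordan : is_jordan A -> is_jordan_dialg double_dialg.
Proof.
move=> [mulC J0]; split; first by split.
split=> [x y|i i_range s]; first by congr pair => /=; rewrite mulC.
apply: injective_projections => /=.
  rewrite (linear_fglift (L := fst)); last exact: linearP.
  rewrite fglift_relabel JpolyE /comp !deval_double_fst !dbar_psi.
  by have := J0 (fun l => (s l).1); rewrite /peval JpolyE.
rewrite (linear_fglift (L := snd)); last exact: linearP.
rewrite fglift_relabel JpolyE /comp !deval_double_psi;
  try by apply: (count_mem_perm_iota _ i_range).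
by have := J0 (fun l => if l == i then (s l).2 else (s l).1); rewrite /peval JpolyE.
Qed.
End DoubleDialgebra.

Lemma double_dialg_special (k : fieldType) (A : nalg k) :
  is_special_jordan A -> is_special_jordan_dialg (double_dialg A).
Proof.
move=> [A_jordan [B [phi [B_assoc [phi_inj [phi_lin phi_mul]]]]]].
split; first exact: double_dialg_jordan.
exists (double_dialg B), (fun p => (phi p.1, phi p.2)).
split.
  by split; [split | do 2?split; move=> x y z; congr pair; rewrite /= B_assoc].
split; first by move=> [x1 x2] [y1 y2] [/phi_inj -> /phi_inj ->].
split; first by move=> a x y; congr pair; rewrite /= phi_lin.
by split=> x y; congr pair; rewrite /= phi_mul.
Qed.

Lemma bar_central_part_special_vanish (k : fieldType) j (f : DiAlg k) :
  (forall D : dialg k, is_special_jordan_dialg D -> dvanishes D f) ->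
  forall A : nalg k, is_special_jordan A -> nvanishes A (bar (central_part j f)).
Proof.
move=> f_special A A_special a; rewrite /peval fglift_relabel fglift_central_part.
have := congr1 snd (f_special _ (double_dialg_special A_special) (double_subst a j)).
rewrite /dpeval (linear_fglift (L := snd)) ?fgliftE => [vanish|]; last exact: linearP.
apply: etrans vanish; rewrite big_mkcond; apply: eq_bigr => m _ /=.
by rewrite deval_double_subst; case: ifP; rewrite ?scaler0.
Qed.

Section LeftMultiplications.
Variables (k : fieldType) (D : dialg k).

Definition is_lmul : {pred D -> D} := fun f => `[< exists u, f = dl u >].

Lemma is_lmul_submod_closed : submod_closed is_lmul.
Proof.
split=> [|a f g /asboolP[u ->] /asboolP[v ->]]; apply/asboolP.
  by exists 0; apply/funext => y; rewrite (bilin0l (@dlDl _ D)).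
by exists (a *: u + v); apply/funext => y; rewrite dlDl.
Qed.

HB.instance Definition _ := GRing.isSubmodClosed.Build k (D -> D) is_lmul is_lmul_submod_closed.

(* For a Jordan dialgebra D, the operators [dl u] represent D modulo its left annihilator, on
   which [lmul_mul] below is a well-defined commutative product. *)
Record lmulop := LMulop { lmulop_val :> D -> D; _ : lmulop_val \in is_lmul }.
HB.instance Definition _ := [isSub for lmulop_val].
HB.instance Definition _ := [Choice of lmulop by <:].
HB.instance Definition _ := [SubChoice_isSubLmodule of lmulop by <:].

Lemma lmulop_ext (F G : lmulop) : F =1 G -> F = G.
Proof. by move=> FG; apply/val_inj/funext. Qed.

Lemma lmulop_combE a (F G : lmulop) y : (a *: F + G) y = a *: F y + G y.
Proof. by []. Qed.

Lemma dl_is_lmul u : dl u \in is_lmul. Proof. by apply/asboolP; exists u. Qed.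
Definition lmul_of u : lmulop := LMulop (dl_is_lmul u).

Definition lmul_rep (F : lmulop) : D := projT1 (cid (asboolW (valP F))).
Lemma lmul_repP (F : lmulop) : F =1 dl (lmul_rep F).
Proof. by move=> y; rewrite -(projT2 (cid (asboolW (valP F)))). Qed.

Lemma lmul_repD a (F G : lmulop) : a *: F + G =1 dl (a *: lmul_rep F + lmul_rep G).
Proof. by move=> y; rewrite lmulop_combE !lmul_repP dlDl. Qed.

Lemma lmulop_linear (F : lmulop) a y z : F (a *: y + z) = a *: F y + F z.
Proof. by rewrite !lmul_repP dlDr. Qed.

Lemma lmulop_sum (F : lmulop) (I : Type) (r : seq I) (G : I -> D) :
  F (\sum_(i <- r) G i) = \sum_(i <- r) F (G i).
Proof. by rewrite lmul_repP (bilin_sumr (@dlDr _ D)); apply: eq_bigr => i _; rewrite lmul_repP. Qed.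

Definition lmul_mul (F G : lmulop) : lmulop := lmul_of (dl (lmul_rep F) (lmul_rep G)).

End LeftMultiplications.

Section NullExtension.
Variables (k : fieldType) (D : dialg k).
Hypothesis D_jordan : is_jordan_dialg D.

Let dl_dr : forall x y z : D, dl (dr x y) z = dl (dl x y) z := D_jordan.1.1.
Let dlC : forall x y : D, dl x y = dr y x := D_jordan.2.1.

Lemma dl_drE (x y : D) : dl (dr x y) = dl (dl x y).
Proof. by apply/funext => z; apply: dl_dr. Qed.

Lemma dl_dlC (x y : D) : dl (dl x y) = dl (dl y x).
Proof. by rewrite {1}dlC dl_drE. Qed.

Lemma dl_dl_congr (x x' y y' : D) : dl x = dl x' -> dl y = dl y' -> dl (dl x y) = dl (dl x' y').
Proof. by move=> ex ey; rewrite ex dl_dlC ey dl_dlC. Qed.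

Lemma deval_dl_congr (t1 t2 : nat -> D) : (forall l, dl (t1 l) = dl (t2 l)) ->
  forall u v, dbar u = dbar v -> dl (deval t1 u) = dl (deval t2 v).
Proof.
move=> t12; elim=> [a|u1 IH1 u2 IH2|u1 IH1 u2 IH2] [b|v1 v2|v1 v2] //= [];
  by [move=> -> | move=> e1 e2; rewrite ?dl_drE; apply: dl_dl_congr; [apply: IH1 | apply: IH2]].
Qed.

Lemma lmul_mulE (F G : lmulop D) u v : F =1 dl u -> G =1 dl v -> lmul_mul F G =1 dl (dl u v).
Proof.
have rep_eq (H : lmulop D) w : H =1 dl w -> dl (lmul_rep H) = dl w.
  by move=> Hw; apply/funext => y; rewrite -lmul_repP.
by move=> /rep_eq Fu /rep_eq Gv y; rewrite /= (dl_dl_congr Fu Gv).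
Qed.

Lemma lmul_mulDl a (F G H : lmulop D) :
  lmul_mul (a *: F + G) H = a *: lmul_mul F H + lmul_mul G H.
Proof.
apply: lmulop_ext => y; rewrite lmulop_combE (lmul_mulE (lmul_repD a F G) (lmul_repP H)).
by rewrite !(lmul_mulE (lmul_repP _) (lmul_repP H)) !dlDl.
Qed.

Lemma lmul_mulDr a (F G H : lmulop D) :
  lmul_mul H (a *: F + G) = a *: lmul_mul H F + lmul_mul H G.
Proof.
apply: lmulop_ext => y; rewrite lmulop_combE (lmul_mulE (lmul_repP H) (lmul_repD a F G)).
by rewrite !(lmul_mulE (lmul_repP H) (lmul_repP _)) dlDr dlDl.
Qed.

Lemma lmul_mulC (F G : lmulop D) : lmul_mul F G = lmul_mul G F.
Proof. by apply: lmulop_ext => y; rewrite /= dl_dlC. Qed.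

Definition null_mul (p q : lmulop D * D) : lmulop D * D :=
  (lmul_mul p.1 q.1, p.1 q.2 + q.1 p.2).

Lemma null_mulDl a p q r : null_mul (a *: p + q) r = a *: null_mul p r + null_mul q r.
Proof.
congr pair => /=; first exact: lmul_mulDl.
by rewrite lmulop_linear scalerDr [RHS]addrACA; congr (_ + _); apply: lmulop_combE.
Qed.

Lemma null_mulDr a p q r : null_mul r (a *: p + q) = a *: null_mul r p + null_mul r q.
Proof.
congr pair => /=; first exact: lmul_mulDr.
by rewrite lmulop_linear scalerDr [RHS]addrACA; congr (_ + _); apply: lmulop_combE.
Qed.

Definition null_ext : nalg k := NAlg null_mulDl null_mulDr.

Lemma null_ext_comm (p q : null_ext) : nmul p q = nmul q p.
Proof. by rewrite /= /null_mul lmul_mulC addrC. Qed.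

Section Evaluation.
Variables (s : nat -> null_ext) (a : nat -> D).
Hypothesis s_a : forall l, (s l).1 =1 dl (a l).

Lemma neval_null_fst i w : (neval s w).1 =1 dl (deval a (psi_mono i w)).
Proof.
elim: w => [l|u IHu v IHv] y; first exact: s_a.
apply: etrans (lmul_mulE IHu IHv y) _.
by rewrite [RHS]/=; case: ifP => _ //=; rewrite dl_drE.
Qed.

Lemma neval_null_snd w : uniq (nleaves w) ->
  (neval s w).2 =
  \sum_(j <- nleaves w) deval (fun l => if l == j then (s l).2 else a l) (psi_mono j w).
Proof.
elim: w => [l _|u IHu v IHv]; first by rewrite /= big_seq1 eqxx.
rewrite /= cat_uniq => /and3P[uu /hasPn vu vv].
set t := fun j l => if l == j then (s l).2 else a l.
have t_off j w : j \notin nleaves w -> deval (t j) (psi_mono j w) = deval a (psi_mono j w).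
  move=> jw; apply: eq_in_deval => l; rewrite dleaves_psi /t => lw.
  by case: eqP => // lj; rewrite -lj lw in jw.
rewrite big_cat addrC IHu // IHv // !lmulop_sum; congr (_ + _); apply: eq_big_seq => j j_w.
  have j_v := contraL (vu j) j_w.
  by rewrite j_w /= (neval_null_fst j) dlC (t_off _ _ j_v).
have j_u : j \notin nleaves u by apply: vu.
by rewrite (negbTE j_u) /= (neval_null_fst j) (t_off _ _ j_u).
Qed.

Lemma neval_null_snd_iota w n : perm_eq (nleaves w) (iota 1 n) ->
  (neval s w).2 =
  \sum_(j <- iota 1 n) deval (fun l => if l == j then (s l).2 else a l) (psi_mono j w).
Proof.
by move=> w_perm; rewrite neval_null_snd -?(perm_big _ w_perm) // (perm_uniq w_perm) iota_uniq.
Qed.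

End Evaluation.

Lemma null_ext_jordan : is_jordan null_ext.
Proof.
split=> [|s]; first exact: null_ext_comm.
pose a l := lmul_rep (s l).1; have s_a l : (s l).1 =1 dl (a l) by apply: lmul_repP.
have Psi_J0 i : (1 <= i <= 4)%N -> forall t, dpeval t (Psi i (Jpoly k)) = 0 := D_jordan.2.2 i.
apply: injective_projections.
  apply: lmulop_ext => y; have fst_lin : linear (fun p : null_ext => p.1 y) by [].
  rewrite /peval (linear_fglift fst_lin) JpolyE /comp !(neval_null_fst s_a 1).
  have := Psi_J0 1%N isT a; rewrite dpeval_PsiE JpolyE /comp => J1.
  by rewrite -!(bilinDl (@dlDl _ D)) -!(bilinBl (@dlDl _ D)) J1 (bilin0l (@dlDl _ D)).
rewrite /peval (linear_fglift (L := snd)); last exact: linearP.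
rewrite JpolyE /comp !(neval_null_snd_iota s_a (n := 4)) //.
rewrite -!(big_split, sumrB) big1_seq // => j /andP[_]; rewrite mem_iota => j_range.
by have := Psi_J0 j j_range (fun l => if l == j then (s l).2 else a l); rewrite dpeval_PsiE JpolyE.
Qed.

Lemma deval_psi_central (t : nat -> D) m : uniq (dleaves m) ->
  deval t (psi_mono (central m) (dbar m)) = deval t m.
Proof.
elim: m => [a|u IHu v IHv|u IHu v IHv] //=; rewrite cat_uniq => /and3P[uu /hasPn vu vv].
  have cu : central v \notin nleaves (dbar u) by rewrite nleaves_dbar; apply/vu/central_dleaves.
  by rewrite (negbTE cu) /= IHv //; congr (_ _); apply: deval_dl_congr; rewrite ?dbar_psi.
rewrite nleaves_dbar central_dleaves /= IHu // -!dlC; congr (_ _).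
by apply: deval_dl_congr; rewrite ?dbar_psi.
Qed.

Definition null_ext_subst (s : nat -> D) j : nat -> null_ext :=
  fun l => (lmul_of (s l), if l == j then s l else 0).

Lemma neval_null_ext_subst (s : nat -> D) m : uniq (dleaves m) ->
  (neval (null_ext_subst s (central m)) (dbar m)).2 = deval s m.
Proof.
move=> m_uniq; rewrite (@neval_null_snd _ s) ?nleaves_dbar //.
rewrite (bigD1_seq (central m)) ?central_dleaves //= big1_seq ?addr0 => [|l /andP[l_c l_m]].
  rewrite -[RHS](deval_psi_central s m_uniq); apply: eq_in_deval => l _.
  by case: eqP => [->|]; rewrite /null_ext_subst /= ?eqxx.
apply: (@deval_eq0 _ _ _ l); first by rewrite dleaves_psi nleaves_dbar.
by rewrite eqxx /null_ext_subst /= (negbTE l_c).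
Qed.

End NullExtension.

Lemma peval_null_central_part (k : fieldType) (D : dialg k) (D_jordan : is_jordan_dialg D)
    (s : nat -> D) j (f : DiAlg k) :
  dmultilinear f ->
  (peval (null_ext_subst D_jordan s j) (bar (central_part j f))).2 = dpeval s (central_part j f).
Proof.
move=> [S [S_uniq f_S]]; rewrite /peval (linear_fglift (L := snd)); last exact: linearP.
rewrite fglift_relabel /dpeval !fglift_central_part.
rewrite big_seq_cond [RHS]big_seq_cond; apply: eq_bigr => m /andP[m_f /eqP <-] /=.
by rewrite neval_null_ext_subst // (perm_uniq (f_S m m_f)).
Qed.

Lemma central_part_SId (k : fieldType) n (f : DiAlg k) : dmultilin_in n f -> DiSId f ->
  exists2 j, (1 <= j <= n)%N & SId (bar (central_part j f)).
Proof.
move=> f_ml [f_multi [f_special f_not]]; apply: contrapT => no_j.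
apply: f_not => D D_jordan s.
have -> : dpeval s f = \sum_(j <- iota 1 n) dpeval s (central_part j f).
  by rewrite -{1}(central_part_sum f_ml) /dpeval raddf_sum.
rewrite big1_seq // => j; rewrite mem_iota add1n ltnS => /andP[_ j_range].
rewrite -(peval_null_central_part D_jordan) //.
suff -> : nvanishes (null_ext D_jordan) (bar (central_part j f)) by [].
apply: contrapT => not_vanish; apply: no_j; exists j => //; split.
  exact: bar_central_part_multilinear.
split; first exact: bar_central_part_special_vanish.
by move=> all_vanish; apply/not_vanish/all_vanish/null_ext_jordan.
Qed.

Theorem mainTheorem6 (k : fieldType) (char0 : [pchar k] =i pred0) :
  (forall (n : nat) (g : Alg k), multilin_in n g -> SId g ->
     forall i : nat, (1 <= i <= n)%N -> DiSId (Psi i g)) /\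
  (forall (n : nat) (f : DiAlg k), dmultilin_in n f -> DiSId f ->
     exists2 j : nat, (1 <= j <= n)%N & SId (bar (central_part j f))).
Proof. by split=> n; [apply: Psi_SId | apply: central_part_SId]. Qed.
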